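(* Let $L=\mathbb{Z}\times\mathbb{Z}$ with the product $$(p,q)\cdot(p',q')=\Bigl(p+p',\ q+q'+\binom{p}{2}p'\Bigr).$$ Then $L$ is a loop which is torsion-free nilpotent of class $3$, with $$D_2L=D_3L=\{(0,q)\mid q\in\mathbb{Z}\},$$ while $\mathrm{LMlt}(L)$ is nilpotent of class $2$.
   Context: Here $\binom{p}{2}=p(p-1)/2$ for $p\in\mathbb{Z}$. A loop is a set with a product and two-sided identity in which all left multiplications $x\mapsto ax$ and right multiplications $x\mapsto xa$ are bijective. $\mathrm{LMlt}(L)$ is the group of permutations of $L$ generated by the left multiplications $L_a\colon x\mapsto ax$. The loop algebra $\mathbb{Q}L$ has basis $L$ with bilinearly extended product; $I$ is the kernel of the linear map $\mathbb{Q}L\to\mathbb{Q}$ sending each element of $L$ to $1$; $I^k$ is the ideal spanned by all products (any bracketing) of at least $k$ elements of $I$; $D_kL=\{g\in L\mid g-1\in I^k\}$. $L$ is torsion-free nilpotent of class $n$ if $D_{n+1}L$ is trivial and $D_nL$ is not. A group $G$ is nilpotent of class $c$ if $\gamma_{c+1}G=1\neq\gamma_cG$, where $\gamma_1G=G$, $\gamma_{k+1}G=[G,\gamma_kG]$. *)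

From mathcomp Require Import all_boot all_order all_algebra.
Set Implicit Arguments. Unset Strict Implicit. Unset Printing Implicit Defensive.
Import Order.TTheory GRing.Theory Num.Theory.
Local Open Scope ring_scope.

Section Loops.
Variable T : eqType.
Variable mul : T -> T -> T.
Variable e : T.

Definition is_loop : Prop :=
  (forall x, mul e x = x /\ mul x e = x) /\
  (forall a, bijective (mul a)) /\
  (forall a, bijective (fun x => mul x a)).

(* ---- The loop algebra QL ----
   An element of QL is represented by a finite formal linear combination
   (a list of pairs (coefficient, basis element)); two representations
   denote the same element iff their coefficient functions agree. *)
Definition QL := seq (rat * T).

Definition coefQL (u : QL) (x : T) : rat :=
  \sum_(a <- u) (if a.2 == x then a.1 else 0).

Definition eqQL (u v : QL) : Prop := forall x, coefQL u x = coefQL v x.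

Definition basisQL (x : T) : QL := [:: (1, x)].
Definition addQL (u v : QL) : QL := u ++ v.
Definition scaleQL (c : rat) (u : QL) : QL := [seq (c * a.1, a.2) | a <- u].
Definition subQL (u v : QL) : QL := addQL u (scaleQL (-1) v).
Definition mulQL (u v : QL) : QL :=
  [seq (a.1 * b.1, mul a.2 b.2) | a <- u, b <- v].

Definition augmentation (u : QL) : rat := \sum_(a <- u) a.1.
Definition inI (u : QL) : Prop := augmentation u = 0.

Inductive Iprod : nat -> QL -> Prop :=
  | Iprod_leaf u : inI u -> Iprod 1 u
  | Iprod_node m n u v : Iprod m u -> Iprod n v -> Iprod (m + n) (mulQL u v).

Definition in_span (P : QL -> Prop) (v : QL) : Prop :=
  exists ws : seq (rat * QL),
    (forall w, w \in ws -> P w.2) /\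
    eqQL v (flatten [seq scaleQL w.1 w.2 | w <- ws]).

Definition inIpow (k : nat) (v : QL) : Prop :=
  in_span (fun u => exists2 m, (k <= m)%N & Iprod m u) v.

Definition Dk (k : nat) (g : T) : Prop := inIpow k (subQL (basisQL g) (basisQL e)).

Definition tf_nilpotent_class (n : nat) : Prop :=
  (forall g, Dk n.+1 g <-> g = e) /\ ~ (forall g, Dk n g -> g = e).

End Loops.

Section PermGroups.
Variable T : Type.

Inductive gen (S : (T -> T) -> Prop) : (T -> T) -> Prop :=
  | gen_id : gen S id
  | gen_mul s g : S s -> gen S g -> gen S (s \o g)
  | gen_inv s s' g : S s -> cancel s s' -> cancel s' s -> gen S g -> gen S (s' \o g)
  | gen_ext f g : gen S f -> f =1 g -> gen S g.

Definition comm_set (G H : (T -> T) -> Prop) : (T -> T) -> Prop :=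
  fun c => exists g g' h h', [/\ G g, H h, cancel g g' /\ cancel g' g,
    cancel h h' /\ cancel h' h & c =1 g' \o h' \o g \o h].

Fixpoint gamma (G : (T -> T) -> Prop) (k : nat) : (T -> T) -> Prop :=
  match k with
  | 0 | 1 => G
  | k'.+1 => gen (comm_set G (gamma G k'))
  end.

Definition group_nilpotent_class (G : (T -> T) -> Prop) (c : nat) : Prop :=
  (forall f, gamma G c.+1 f -> f =1 id) /\ ~ (forall f, gamma G c f -> f =1 id).

Definition LMlt (mul : T -> T -> T) : (T -> T) -> Prop :=
  gen (fun f => exists a, f = mul a).

End PermGroups.

Definition binom2 (p : int) : int := ((p * (p - 1)) %/ 2)%Z.

Definition mulZ2 (x y : int * int) : int * int :=
  (x.1 + y.1, x.2 + y.2 + binom2 x.1 * y.1).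

Definition eZ2 : int * int := (0, 0).

(* The functionals 1, p, C(p,2) and q on L, extended linearly to QL, obey
   Leibniz-type rules with respect to the product: the augmentation is
   multiplicative, p(xy) = p(x) + p(y), C(p+p',2) = C(p,2) + C(p',2) + p p'
   and q(xy) = q(x) + q(y) + C(p(x),2) p(y).  Hence a product of m elements
   of I is killed by p when m >= 2, by C(p,2) when m >= 3 and by q when
   m >= 4, so D_2 L lies in {p = 0} and D_4 L is trivial.  Conversely
   (0,1) - 1 is an explicit combination of triple products of elements x - 1,
   and the elements (0,q) lie in the left nucleus, so D_3 L contains all of
   them.  Every element of LMlt(L) is an affine map
   (p,q) |-> (p + a, q + c p + b); commutators of such maps are translations
   of q, which commute with every affine map. *)
From mathcomp Require Import all_boot all_order all_algebra.
From mathcomp Require Import ring zify.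
Set Implicit Arguments. Unset Strict Implicit. Unset Printing Implicit Defensive.
Import Order.TTheory GRing.Theory Num.Theory.
Local Open Scope ring_scope.

Section LoopAlgebra.
Variables (T : eqType) (mul : T -> T -> T) (e : T).
Implicit Types (u v : QL T) (x y : T) (f : T -> rat).

Definition lin f u : rat := \sum_(a <- u) a.1 * f a.2.
Definition mapQL (phi : T -> T) u : QL T := [seq (a.1, phi a.2) | a <- u].
Definition deltaQL x : QL T := subQL (basisQL x) (basisQL e).

Lemma lin_cat f u v : lin f (u ++ v) = lin f u + lin f v.
Proof. by rewrite /lin big_cat. Qed.

Lemma lin_scaleQL f c u : lin f (scaleQL c u) = c * lin f u.
Proof. by rewrite /lin big_map mulr_sumr; apply: eq_bigr => a _ /=; rewrite mulrA. Qed.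

Lemma lin_flatten f (ws : seq (rat * QL T)) :
  lin f (flatten [seq scaleQL w.1 w.2 | w <- ws]) = \sum_(w <- ws) w.1 * lin f w.2.
Proof.
elim: ws => [|w ws IH]; first by rewrite /lin !big_nil.
by rewrite map_cons /= lin_cat IH lin_scaleQL big_cons.
Qed.

Lemma lin_mapQL f phi u : lin f (mapQL phi u) = lin (f \o phi) u.
Proof. by rewrite /lin big_map. Qed.

Lemma lin_deltaQL f x : lin f (deltaQL x) = f x - f e.
Proof. by rewrite /lin !big_cons big_nil /=; ring. Qed.

Lemma augmentation_lin u : augmentation u = lin (fun=> 1) u.
Proof. by apply: eq_bigr => a _; rewrite mulr1. Qed.

Lemma coefQL_lin u x : coefQL u x = lin (fun y => (y == x)%:R) u.
Proof. by apply: eq_bigr => a _; case: eqP; rewrite ?mulr1 ?mulr0. Qed.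

Lemma lin_coefQL f u (s : seq T) : uniq s -> {subset map snd u <= s} ->
  lin f u = \sum_(x <- s) coefQL u x * f x.
Proof.
move=> s_uniq; elim: u => [|a u IH] u_s.
  by rewrite /lin big_nil big1 // => x _; rewrite /coefQL big_nil mul0r.
have a_s : a.2 \in s by apply: u_s; rewrite inE eqxx.
rewrite /lin big_cons -/(lin f u) IH; last by move=> y y_u; apply: u_s; rewrite inE y_u orbT.
under [RHS]eq_bigr do rewrite /coefQL big_cons -/(coefQL u _) mulrDl.
rewrite big_split /=; congr (_ + _).
rewrite (bigD1_seq a.2) //= eqxx big1 ?addr0 // => x /negbTE.
by rewrite eq_sym => ->; rewrite mul0r.
Qed.

Lemma lin_eqQL f u v : eqQL u v -> lin f u = lin f v.
Proof.
move=> uv; set s := undup (map snd (u ++ v)).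
have sub w : {subset map snd w <= s} -> lin f w = \sum_(x <- s) coefQL w x * f x.
  exact: lin_coefQL (undup_uniq _).
rewrite !sub; first by apply: eq_bigr => x _; rewrite uv.
all: by move=> y y_w; rewrite mem_undup map_cat mem_cat y_w ?orbT.
Qed.

Lemma eqQL_lin u v : (forall f, lin f u = lin f v) -> eqQL u v.
Proof. by move=> uv x; rewrite !coefQL_lin. Qed.

Lemma lin_mulQL f (s : seq ((T -> rat) * (T -> rat))) u v :
  (forall x y, f (mul x y) = \sum_(gh <- s) gh.1 x * gh.2 y) ->
  lin f (mulQL mul u v) = \sum_(gh <- s) lin gh.1 u * lin gh.2 v.
Proof.
move=> fM; rewrite /lin /mulQL big_allpairs_dep /=; symmetry.
under eq_bigr do rewrite big_distrlr.
rewrite exchange_big; apply: eq_bigr => a _ /=.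
rewrite exchange_big; apply: eq_bigr => b _ /=.
by rewrite fM mulr_sumr; apply: eq_bigr => gh _; ring.
Qed.

(* [coefQL] is a locked big operator and does not reduce; this copy does. *)
Definition coefQL_foldr u x : rat :=
  foldr +%R 0 [seq (if a.2 == x then a.1 else 0) | a <- u].

Lemma coefQL_foldrE u x : coefQL_foldr u x = coefQL u x.
Proof. by rewrite /coefQL_foldr foldrE big_map. Qed.

Lemma coefQL_notin u x : x \notin map snd u -> coefQL u x = 0.
Proof.
move=> x_u; rewrite /coefQL big1_seq // => a /andP[_ a_u].
by case: eqP => // ax; move: x_u; rewrite -ax map_f.
Qed.

Lemma eqQL_foldr u v :
  all (fun x => coefQL_foldr u x == coefQL_foldr v x) (map snd (u ++ v)) -> eqQL u v.
Proof.
move=> /allP uv x; have [x_uv|] := boolP (x \in map snd (u ++ v)).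
  by have /eqP := uv x x_uv; rewrite !coefQL_foldrE.
by rewrite map_cat mem_cat negb_or => /andP[x_u x_v]; rewrite !coefQL_notin.
Qed.

Lemma inIpow_eqQL k v v' : inIpow mul k v -> eqQL v v' -> inIpow mul k v'.
Proof. by move=> [ws [ws_I v_ws]] vv'; exists ws; split=> // x; rewrite -vv'. Qed.

Lemma inIpow_add k u v : inIpow mul k u -> inIpow mul k v -> inIpow mul k (addQL u v).
Proof.
move=> [ws [ws_I u_ws]] [ws' [ws'_I v_ws']]; exists (ws ++ ws'); split.
  by move=> w; rewrite mem_cat => /orP[/ws_I|/ws'_I].
apply: eqQL_lin => f; rewrite /addQL map_cat flatten_cat !lin_cat.
by rewrite (lin_eqQL f u_ws) (lin_eqQL f v_ws').
Qed.

Lemma inIpow_scale k c v : inIpow mul k v -> inIpow mul k (scaleQL c v).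
Proof.
move=> [ws [ws_I v_ws]]; exists [seq (c * w.1, w.2) | w <- ws]; split.
  by move=> w /mapP [w' /ws_I w'_I ->].
apply: eqQL_lin => f; rewrite lin_scaleQL (lin_eqQL f v_ws) !lin_flatten big_map.
by rewrite mulr_sumr; apply: eq_bigr => w _; rewrite mulrA.
Qed.

Lemma inIpow_le k k' v : (k <= k')%N -> inIpow mul k' v -> inIpow mul k v.
Proof.
move=> kk' [ws [ws_I v_ws]]; exists ws; split=> // w /ws_I [m k'm w_m].
by exists m => //; apply: leq_trans k'm.
Qed.

Lemma DkE k g : Dk mul e k g = inIpow mul k (deltaQL g).
Proof. by []. Qed.

Lemma Dk_le k k' g : (k <= k')%N -> Dk mul e k' g -> Dk mul e k g.
Proof. exact: inIpow_le. Qed.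

Lemma Dk_unit k : Dk mul e k e.
Proof.
rewrite DkE; exists [::]; split=> //.
by apply: eqQL_lin => f; rewrite lin_deltaQL subrr /lin big_nil.
Qed.

Lemma Dk_lin f k g : (forall m u, (k <= m)%N -> Iprod mul m u -> lin f u = 0) ->
  Dk mul e k g -> f g = f e.
Proof.
move=> f0 [ws [ws_I g_ws]]; apply/eqP; rewrite -subr_eq0 -lin_deltaQL.
rewrite (lin_eqQL f g_ws) lin_flatten big_seq big1 // => w /ws_I [m km w_m].
by rewrite (f0 _ _ km w_m) mulr0.
Qed.

Section LeftNucleus.
Variable c : T.
Hypothesis c_lnuc : forall x y, mul c (mul x y) = mul (mul c x) y.

Lemma mapQL_mulQL u v : mapQL (mul c) (mulQL mul u v) = mulQL mul (mapQL (mul c) u) v.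
Proof.
rewrite /mapQL /mulQL map_allpairs allpairs_mapl.
by apply: eq_allpairs => a b /=; rewrite c_lnuc.
Qed.

Lemma Iprod_mapQL m u : Iprod mul m u -> Iprod mul m (mapQL (mul c) u).
Proof.
elim=> {m u} [u u_I|m n u v _ IHu v_I _]; last first.
  by rewrite mapQL_mulQL; apply: Iprod_node IHu v_I.
by apply: Iprod_leaf; move: u_I; rewrite /inI !augmentation_lin lin_mapQL.
Qed.

Lemma inIpow_mapQL k v : inIpow mul k v -> inIpow mul k (mapQL (mul c) v).
Proof.
move=> [ws [ws_I v_ws]]; exists [seq (w.1, mapQL (mul c) w.2) | w <- ws]; split.
  by move=> w /mapP [w' /ws_I [m km w'_m] ->]; exists m => //; apply: Iprod_mapQL.
apply: eqQL_lin => f; rewrite lin_mapQL (lin_eqQL _ v_ws) !lin_flatten big_map.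
by apply: eq_bigr => w _; rewrite lin_mapQL.
Qed.

Lemma Dk_lnuc_mul k g : mul c e = c -> Dk mul e k c -> Dk mul e k g -> Dk mul e k (mul c g).
Proof.
rewrite !DkE => ce Dc Dg; apply: inIpow_eqQL (inIpow_add (inIpow_mapQL Dg) Dc) _.
by apply: eqQL_lin => f; rewrite /addQL lin_cat lin_mapQL !lin_deltaQL /= ce; ring.
Qed.

Lemma Dk_lnuc_inv k d : mul c d = e -> mul c e = c -> Dk mul e k d -> Dk mul e k c.
Proof.
rewrite !DkE => cd ce Dd; apply: inIpow_eqQL (inIpow_scale (-1) (inIpow_mapQL Dd)) _.
by apply: eqQL_lin => f; rewrite lin_scaleQL lin_mapQL !lin_deltaQL /= cd ce; ring.
Qed.

End LeftNucleus.

End LoopAlgebra.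

Section GeneratedGroup.
Variable T : Type.
Implicit Types (S P : (T -> T) -> Prop) (f g s : T -> T).

Lemma gen_of S s : S s -> gen S s.
Proof. by move=> Ss; apply: gen_ext (gen_mul Ss (gen_id S)) _. Qed.

Lemma gen_closed S P : P id -> (forall s, S s -> P s) ->
  (forall s s', P s -> cancel s s' -> cancel s' s -> P s') ->
  (forall f g, P f -> P g -> P (f \o g)) -> (forall f g, P f -> f =1 g -> P g) ->
  forall f, gen S f -> P f.
Proof.
move=> Pid PS Pinv PM Pext f; elim=> // [s g /PS Ps _|s s' g /PS Ps ss' s's _|f1 f2 _ Pf].
- exact: PM.
- exact: PM (Pinv _ _ Ps ss' s's).
- exact: Pext.
Qed.

End GeneratedGroup.

Lemma binom2_double (p : int) : binom2 p * 2 = p * (p - 1).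
Proof.
rewrite /binom2; apply: divzK; apply/dvdzP.
have r_ge0 : 0 <= (p %% 2)%Z by apply: modz_ge0.
have r_lt2 : (p %% 2)%Z < 2 by apply: ltz_pmod.
have p_eq := divz_eq p 2; set k := (p %/ 2)%Z in p_eq *.
have [r0|r1] : (p %% 2)%Z = 0 \/ (p %% 2)%Z = 1 by lia.
- by exists (k * (k * 2 - 1)); rewrite {1 2}p_eq r0; ring.
- by exists (k * (k * 2 + 1)); rewrite {1 2}p_eq r1; ring.
Qed.

Lemma binom2D (p p' : int) : binom2 (p + p') = binom2 p + binom2 p' + p * p'.
Proof.
apply: (mulIf (isT : 2 != 0 :> int)).
by rewrite !mulrDl !binom2_double; ring.
Qed.

Local Notation L := (int * int)%type.

Definition aug_L (x : L) : rat := 1.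
Definition p_L (x : L) : rat := x.1%:~R.
Definition binp_L (x : L) : rat := (binom2 x.1)%:~R.
Definition q_L (x : L) : rat := x.2%:~R.

Lemma aug_Iprod m u : Iprod mulZ2 m u -> lin aug_L u = 0.
Proof.
elim=> {m u} [u|m n u v _ IHu _ _]; first by rewrite /inI augmentation_lin.
rewrite (lin_mulQL (s := [:: (aug_L, aug_L)])) ?big_seq1 ?IHu ?mul0r // => x y.
by rewrite big_seq1 /aug_L mulr1.
Qed.

Lemma p_Iprod m u : Iprod mulZ2 m u -> (1 < m)%N -> lin p_L u = 0.
Proof.
elim=> {m u} [//|m n u v u_I _ v_I _ _].
rewrite (lin_mulQL (s := [:: (p_L, aug_L); (aug_L, p_L)])).
  by rewrite !big_cons big_nil !(aug_Iprod u_I, aug_Iprod v_I); ring.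
by move=> x y; rewrite !big_cons big_nil /p_L /aug_L /= intrD; ring.
Qed.

Lemma binp_Iprod m u : Iprod mulZ2 m u -> (2 < m)%N -> lin binp_L u = 0.
Proof.
elim=> {m u} [//|m n u v u_I _ v_I _ mn].
rewrite (lin_mulQL (s := [:: (binp_L, aug_L); (aug_L, binp_L); (p_L, p_L)])); last first.
  by move=> x y; rewrite !big_cons big_nil /binp_L /p_L /aug_L /= binom2D !intrD intrM; ring.
rewrite !big_cons big_nil !(aug_Iprod u_I, aug_Iprod v_I) !mulr0 !mul0r !add0r.
have [m1|m1] := ltnP 1 m; first by rewrite (p_Iprod u_I m1) mul0r.
by rewrite (p_Iprod v_I) ?mulr0 //; lia.
Qed.

Lemma q_Iprod m u : Iprod mulZ2 m u -> (3 < m)%N -> lin q_L u = 0.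
Proof.
elim=> {m u} [//|m n u v u_I _ v_I _ mn].
rewrite (lin_mulQL (s := [:: (q_L, aug_L); (aug_L, q_L); (binp_L, p_L)])); last first.
  by move=> x y; rewrite !big_cons big_nil /q_L /binp_L /p_L /aug_L /= !intrD intrM; ring.
rewrite !big_cons big_nil !(aug_Iprod u_I, aug_Iprod v_I) !mulr0 !mul0r !add0r.
have [m2|m2] := ltnP 2 m; first by rewrite (binp_Iprod u_I m2) mul0r.
by rewrite (p_Iprod v_I) ?mulr0 //; lia.
Qed.

Lemma Dk2_fst g : Dk mulZ2 eZ2 2 g -> g.1 = 0.
Proof.
move=> D; have /eqP := Dk_lin (fun m u km u_I => p_Iprod u_I km) D.
by rewrite /p_L /= intr_eq0 => /eqP.
Qed.

Lemma Dk4_snd g : Dk mulZ2 eZ2 4 g -> g.2 = 0.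
Proof.
move=> D; have /eqP := Dk_lin (fun m u km u_I => q_Iprod u_I km) D.
by rewrite /q_L /= intr_eq0 => /eqP.
Qed.

Lemma mulZ2_0q_lnuc q x y : mulZ2 (0, q) (mulZ2 x y) = mulZ2 (mulZ2 (0, q) x) y.
Proof. by rewrite /mulZ2 /= !add0r (_ : binom2 0 = 0) //; congr (_, _); ring. Qed.

Definition triple_l (x y z : L) : QL L :=
  mulQL mulZ2 (mulQL mulZ2 (deltaQL eZ2 x) (deltaQL eZ2 y)) (deltaQL eZ2 z).
Definition triple_r (x y z : L) : QL L :=
  mulQL mulZ2 (deltaQL eZ2 x) (mulQL mulZ2 (deltaQL eZ2 y) (deltaQL eZ2 z)).

Lemma deltaQL_I x : Iprod mulZ2 1 (deltaQL eZ2 x).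
Proof. by apply: Iprod_leaf; rewrite /inI augmentation_lin lin_deltaQL subrr. Qed.

Lemma Dk3_01 : Dk mulZ2 eZ2 3 (0, 1).
Proof.
exists [:: (3/2, triple_r (1,1) (1,0) (-2,0)); (-1/2, triple_l (1,1) (1,0) (-2,-1));
          (-1/2, triple_l (0,1) (-1,0) (-1,0)); (-1/2, triple_l (0,-1) (-1,1) (0,-1));
          (1, triple_r (2,1) (-1,0) (-1,1))].
split; last by apply: eqQL_foldr; vm_compute.
have l3 x y z : Iprod mulZ2 3 (triple_l x y z).
  exact: Iprod_node (Iprod_node (deltaQL_I x) (deltaQL_I y)) (deltaQL_I z).
have r3 x y z : Iprod mulZ2 3 (triple_r x y z).
  exact: Iprod_node (deltaQL_I x) (Iprod_node (deltaQL_I y) (deltaQL_I z)).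
by move=> w; rewrite !inE => /or4P[| | |/orP[]] /eqP-> /=; exists 3%N.
Qed.

Lemma Dk3_0q q : Dk mulZ2 eZ2 3 (0, q).
Proof.
have rid q' : mulZ2 (0, q') eZ2 = (0, q').
  by rewrite /mulZ2 /=; congr (_, _); ring.
have Dn (n : nat) : Dk mulZ2 eZ2 3 (0, n%:Z).
  elim: n => [|n IH]; first exact: Dk_unit.
  have -> : (0, n.+1%:Z) = mulZ2 (0, 1) (0, n%:Z) by rewrite /mulZ2 /=; congr (_, _); lia.
  exact: (Dk_lnuc_mul (mulZ2_0q_lnuc 1) (rid 1) Dk3_01 IH).
case: q => n; first exact: Dn.
apply: (Dk_lnuc_inv (mulZ2_0q_lnuc _) _ (rid _) (Dn n.+1)).
by rewrite /mulZ2 /eZ2 /=; congr (_, _); rewrite NegzE; lia.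
Qed.

Lemma Dk_iff_fst k g : (2 <= k <= 3)%N -> Dk mulZ2 eZ2 k g <-> g.1 = 0.
Proof.
move=> /andP[k2 k3]; split; first by move=> /(Dk_le k2); apply: Dk2_fst.
by case: g => p q /= ->; apply: Dk_le k3 (Dk3_0q q).
Qed.

Lemma Dk4_iff g : Dk mulZ2 eZ2 4 g <-> g = eZ2.
Proof.
split=> [D|->]; last exact: Dk_unit.
have /(Dk_iff_fst g (isT : (2 <= 3 <= 3)%N)) g1 := Dk_le (isT : (3 <= 4)%N) D.
by rewrite [g]surjective_pairing g1 (Dk4_snd D).
Qed.

Definition affm (a b c : int) (x : L) : L := (x.1 + a, x.2 + c * x.1 + b).

Lemma affmK a b c : cancel (affm a b c) (affm (- a) (c * a - b) (- c)).
Proof. by case=> p q; rewrite /affm /=; congr (_, _); ring. Qed.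

Lemma affmKV a b c : cancel (affm (- a) (c * a - b) (- c)) (affm a b c).
Proof. by case=> p q; rewrite /affm /=; congr (_, _); ring. Qed.

Lemma affm_comp a b c a' b' c' x :
  affm a b c (affm a' b' c' x) = affm (a + a') (b + b' + c * a') (c + c') x.
Proof. by case: x => p q; rewrite /affm /=; congr (_, _); ring. Qed.

Lemma affm_inv a b c f f' :
  f =1 affm a b c -> cancel f f' -> f' =1 affm (- a) (c * a - b) (- c).
Proof. by move=> fE ff' y; rewrite -{1}[y](affmKV a b c) -fE ff'. Qed.

Lemma mulZ2_affm a : mulZ2 a =1 affm a.1 a.2 (binom2 a.1).
Proof. by case=> p q; rewrite /mulZ2 /affm /=; congr (_, _); ring. Qed.

Definition ldivZ2 (a : L) : L -> L :=
  affm (- a.1) (binom2 a.1 * a.1 - a.2) (- binom2 a.1).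

Lemma mulZ2K a : cancel (mulZ2 a) (ldivZ2 a).
Proof. by move=> x; rewrite mulZ2_affm; apply: affmK. Qed.

Lemma mulZ2KV a : cancel (ldivZ2 a) (mulZ2 a).
Proof. by move=> x; rewrite mulZ2_affm; apply: affmKV. Qed.

Lemma loopZ2 : is_loop mulZ2 eZ2.
Proof.
split; [|split].
- case=> p q; rewrite /mulZ2 /eZ2 /= (_ : binom2 0 = 0) //.
  by split; congr (_, _); ring.
- by move=> a; exists (ldivZ2 a); [apply: mulZ2K | apply: mulZ2KV].
- move=> [a1 a2]; exists (fun y : L => (y.1 - a1, y.2 - a2 - binom2 (y.1 - a1) * a1)).
    by case=> p q; rewrite /mulZ2 /= addrK; congr (_, _); ring.
  by case=> p q; rewrite /mulZ2 /=; congr (_, _); ring.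
Qed.

Definition is_affm (f : L -> L) := exists a b c, f =1 affm a b c.
Definition is_shift (f : L -> L) := exists b, f =1 affm 0 b 0.

Lemma LMlt_affm f : LMlt mulZ2 f -> is_affm f.
Proof.
apply: gen_closed.
- by exists 0, 0, 0; case=> p q; rewrite /affm /=; congr (_, _); ring.
- by move=> _ [a ->]; exists a.1, a.2, (binom2 a.1); apply: mulZ2_affm.
- move=> s s' [a [b [c sE]]] sK _; exists (- a), (c * a - b), (- c).
  exact: affm_inv sE sK.
- move=> f1 f2 [a [b [c f1E]]] [a' [b' [c' f2E]]].
  by exists (a + a'), (b + b' + c * a'), (c + c') => x; rewrite /= f2E f1E affm_comp.
- by move=> f1 f2 [a [b [c f1E]]] f12; exists a, b, c => x; rewrite -f12.
Qed.

Lemma comm_affm g g' h h' a1 b1 c1 a2 b2 c2 :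
  g =1 affm a1 b1 c1 -> h =1 affm a2 b2 c2 -> cancel g g' -> cancel h h' ->
  g' \o h' \o g \o h =1 affm 0 (c1 * a2 - c2 * a1) 0.
Proof.
move=> gE hE gK hK x /=.
rewrite (affm_inv gE gK) (affm_inv hE hK) gE hE /affm /=; congr (_, _); ring.
Qed.

Lemma gamma2_shift f : gamma (LMlt mulZ2) 2 f -> is_shift f.
Proof.
apply: gen_closed.
- by exists 0; case=> p q; rewrite /affm /=; congr (_, _); ring.
- move=> s [g [g' [h [h' [/LMlt_affm [a1 [b1 [c1 gE]]] /LMlt_affm [a2 [b2 [c2 hE]]]]]]]].
  move=> [gK _] [hK _] sE; exists (c1 * a2 - c2 * a1) => x.
  by rewrite sE (comm_affm gE hE gK hK).
- move=> s s' [b sE] sK _; exists (- b) => x.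
  by rewrite (affm_inv sE sK) /affm; congr (_, _); ring.
- move=> f1 f2 [b f1E] [b' f2E]; exists (b + b') => x.
  by rewrite /= f2E f1E affm_comp; congr (_, _); ring.
- by move=> f1 f2 [b f1E] f12; exists b => x; rewrite -f12.
Qed.

Lemma gamma3_trivial f : gamma (LMlt mulZ2) 3 f -> f =1 id.
Proof.
apply: (gen_closed (P := fun f => f =1 id)) => //.
- move=> s [g [g' [h [h' [/LMlt_affm [a1 [b1 [c1 gE]]] /gamma2_shift [b hE]]]]]].
  move=> [gK _] [hK _] sE x; rewrite sE (comm_affm gE hE gK hK) /affm /=.
  by case: x => p q /=; congr (_, _); ring.
- by move=> s s' sE _ s'K x; rewrite -[RHS]s'K sE.
- by move=> f1 f2 f1E f2E x; rewrite /= f2E f1E.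
- by move=> f1 f2 f1E f12 x; rewrite -f12 f1E.
Qed.

Lemma gamma2_nontrivial : ~ (forall f, gamma (LMlt mulZ2) 2 f -> f =1 id).
Proof.
pose g := mulZ2 (2, 0); pose h := mulZ2 (1, 0).
pose g' := ldivZ2 (2, 0); pose h' := ldivZ2 (1, 0).
have comm : gamma (LMlt mulZ2) 2 (g' \o h' \o g \o h).
  apply: gen_of; exists g, g', h, h'; split=> //.
  - by apply: gen_of; exists (2, 0).
  - by apply: gen_of; exists (1, 0).
  - by split; [apply: mulZ2K | apply: mulZ2KV].
  - by split; [apply: mulZ2K | apply: mulZ2KV].
move=> /(_ _ comm (0, 0)).
by rewrite (comm_affm (mulZ2_affm _) (mulZ2_affm _) (mulZ2K _) (mulZ2K _)).
Qed.

Theorem proposition3p4 :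
  is_loop mulZ2 eZ2 /\
  tf_nilpotent_class mulZ2 eZ2 3 /\
  (forall g : int * int, Dk mulZ2 eZ2 2 g <-> g.1 = 0) /\
  (forall g : int * int, Dk mulZ2 eZ2 3 g <-> g.1 = 0) /\
  group_nilpotent_class (LMlt mulZ2) 2.
Proof.
split; first exact: loopZ2.
split.
  split; first exact: Dk4_iff.
  by move=> /(_ (0, 1) (Dk3_0q 1)).
split; first by move=> g; apply: Dk_iff_fst.
split; first by move=> g; apply: Dk_iff_fst.
split; [exact: gamma3_trivial | exact: gamma2_nontrivial].
Qed.
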